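(* Let $a,b,q$ be parameters (complex numbers or indeterminates) such that none of the denominators below vanishes, and put $c(n,a,b,q)=\frac{(b;q)_n}{(a;q)_n}$. Define, for $n\ge 0$, $$T(2n)=\frac{q^n(1-q^nb)(1-q^{n-1}a)}{(1-q^{2n-1}a)(1-q^{2n}a)},\qquad T(2n+1)=\frac{q^n(1-q^{n+1})(b-q^na)}{(1-q^{2n+1}a)(1-q^{2n}a)},$$ and define numbers $A(n,k)$ for integers $n\ge 0$ and all integers $k$ by $$A(2n,2k)=\begin{bmatrix} n\\ k\end{bmatrix} c(n-k,q^{2k}a,q^kb,q),\qquad A(2n+1,2k+1)=\begin{bmatrix} n\\ k\end{bmatrix} c(n-k,q^{2k+1}a,q^{k+1}b,q),$$ and $A(n,k)=0$ whenever $n-k$ is odd. Then $$A(0,k)=[k=0],\qquad A(n,0)=T(0)A(n-1,1)\ (n\ge1),\qquad A(n,k)=A(n-1,k-1)+T(k)A(n-1,k+1)\ (n\ge1,\ k\ge1).$$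
   Context: Notation: $(x;q)_n=\prod_{j=0}^{n-1}(1-q^jx)$; $\begin{bmatrix} n\\ k\end{bmatrix}=\frac{(q;q)_n}{(q;q)_k(q;q)_{n-k}}$ for $0\le k\le n$ and $\begin{bmatrix} n\\ k\end{bmatrix}=0$ for $k<0$ or $k>n$. $[P]$ denotes $1$ if $P$ is true and $0$ otherwise. (At $n=0$ the factor $1-q^{-1}a$ cancels, so $T(0)=\frac{1-b}{1-a}$.) *)

From mathcomp Require Import all_boot all_order all_algebra.
Set Implicit Arguments. Unset Strict Implicit. Unset Printing Implicit Defensive.
Import Order.TTheory GRing.Theory Num.Theory.
Local Open Scope ring_scope.

Definition qpoch (F : fieldType) (x q : F) (n : nat) : F :=
  \prod_(j < n) (1 - q ^+ j * x).

Definition qbinom (F : fieldType) (q : F) (n k : nat) : F :=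
  if (k <= n)%N then qpoch q q n / (qpoch q q k * qpoch q q (n - k)) else 0.

Definition cfun (F : fieldType) (n : nat) (a b q : F) : F :=
  qpoch b q n / qpoch a q n.

(* T(k); T(0) = (1-b)/(1-a) after cancelling the factor 1 - q^{-1} a *)
Definition Tfun (F : fieldType) (a b q : F) (k : nat) : F :=
  if k == 0%N then (1 - b) / (1 - a)
  else if odd k then
    let n := k./2 in
    q ^+ n * (1 - q ^+ n.+1) * (b - q ^+ n * a) /
      ((1 - q ^+ (n.*2.+1) * a) * (1 - q ^+ (n.*2) * a))
  else
    let n := k./2 in
    q ^+ n * (1 - q ^+ n * b) * (1 - q ^+ n.-1 * a) /
      ((1 - q ^+ (n.*2).-1 * a) * (1 - q ^+ (n.*2) * a)).

(* A(2m,2j)   = [m j] c(m-j, q^{2j} a, q^j b, q)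
   A(2m+1,2j+1) = [m j] c(m-j, q^{2j+1} a, q^{j+1} b, q)
   A(n,k) = 0 if n-k odd; negative k gives 0 (Gaussian binomial vanishes). *)
Definition Afun (F : fieldType) (a b q : F) (n : nat) (k : int) : F :=
  match k with
  | Negz _ => 0
  | Posz k =>
      if odd (n + k) then 0
      else if odd n then
        qbinom q n./2 k./2 * cfun (n./2 - k./2) (q ^+ k * a) (q ^+ (k./2).+1 * b) q
      else
        qbinom q n./2 k./2 * cfun (n./2 - k./2) (q ^+ k * a) (q ^+ (k./2) * b) q
  end.

From mathcomp Require Import all_boot all_order all_algebra.
From mathcomp Require Import ring.
Import Order.TTheory GRing.Theory Num.Theory.
Local Open Scope ring_scope.

(* A(n,k) vanishes unless n and k have the same parity, so only the rows
   A(2n+1, 2j+1) and A(2n+2, 2j+2) carry content.  In each recurrence the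
   Gaussian binomials are all expressed through [n j] by their ratios, and
   the quotients c(.) through a single one by peeling off one factor of a
   q-Pochhammer symbol, either at the front or at the back.  What remains is
   an identity of rational functions in q, q^j, q^(n-j), q^(2j) a and q^j b. *)

Section QPochhammer.

Variables (F : fieldType) (q : F).

Lemma qpochS x n : qpoch x q n.+1 = qpoch x q n * (1 - q ^+ n * x).
Proof. by rewrite /qpoch big_ord_recr. Qed.

Lemma qpochSl x n : qpoch x q n.+1 = (1 - x) * qpoch (q * x) q n.
Proof.
rewrite /qpoch big_ord_recl expr0 mul1r; congr (_ * _).
by apply: eq_bigr => i _; rewrite /= exprS mulrCA mulrA.
Qed.

Lemma cfun0 x y : cfun 0 x y q = 1.
Proof. by rewrite /cfun /qpoch !big_ord0 divr1. Qed.

Lemma cfunS x y n :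
  cfun n.+1 x y q = cfun n x y q * ((1 - q ^+ n * y) / (1 - q ^+ n * x)).
Proof. by rewrite /cfun !qpochS invfM mulrACA. Qed.

Lemma cfunSl x y n :
  cfun n.+1 x y q = (1 - y) / (1 - x) * cfun n (q * x) (q * y) q.
Proof. by rewrite /cfun !qpochSl invfM mulrACA. Qed.

Lemma cfun_shift x y n : 1 - q ^+ n * x != 0 ->
  cfun n x y q = (1 - q ^+ n * x) / (1 - x) * cfun n (q * x) y q.
Proof.
move=> hxn; rewrite /cfun.
have hP : qpoch x q n * (1 - q ^+ n * x) = (1 - x) * qpoch (q * x) q n.
  by rewrite -qpochS qpochSl.
have -> : (qpoch x q n)^-1 =
          (1 - q ^+ n * x) * ((1 - x) * qpoch (q * x) q n)^-1.
  by rewrite -hP invfM mulrCA mulfV ?mulr1.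
by rewrite invfM; ring.
Qed.

Lemma qbinom_gt n k : (n < k)%N -> qbinom q n k = 0.
Proof. by rewrite /qbinom ltnNge => /negbTE ->. Qed.

Lemma qbinomSS n k :
  qbinom q n.+1 k.+1 = qbinom q n k * (1 - q ^+ n.+1) / (1 - q ^+ k.+1).
Proof.
rewrite /qbinom ltnS subSS; case: leqP => _; last by rewrite !mul0r.
by rewrite !qpochS -!exprSr !invfM; ring.
Qed.

Hypothesis hq : forall m : nat, 1 - q ^+ m.+1 != 0.

Lemma qpoch_q_neq0 n : qpoch q q n != 0.
Proof. by apply/prodf_neq0 => i _; rewrite -exprSr. Qed.

Lemma qbinom_n0 n : qbinom q n 0 = 1.
Proof. by rewrite /qbinom subn0 /qpoch big_ord0 mul1r divff // qpoch_q_neq0. Qed.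

(* Valid for all [k]: when [n <= k] both sides vanish, the right one because
   the truncated difference [n - k] is 0. *)
Lemma qbinomSr n k :
  qbinom q n k.+1 = qbinom q n k * (1 - q ^+ (n - k)) / (1 - q ^+ k.+1).
Proof.
rewrite /qbinom; case: (ltnP k n) => [ltkn|lenk]; last first.
  by move/eqP: lenk => ->; rewrite expr0 subrr mulr0 mul0r.
rewrite (ltnW ltkn) -(subnSK ltkn) !qpochS -!exprSr.
by field; rewrite !hq !qpoch_q_neq0.
Qed.

End QPochhammer.

Section Recurrence.

Variables (F : fieldType) (a b q : F).

Lemma Afun_odd n k : odd (n + k) -> Afun a b q n (Posz k) = 0.
Proof. by rewrite /Afun => ->. Qed.

Lemma Afun_double n j :
  Afun a b q n.*2 (Posz j.*2) =
  qbinom q n j * cfun (n - j) (q ^+ j.*2 * a) (q ^+ j * b) q.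
Proof. by rewrite /Afun -doubleD !odd_double !doubleK. Qed.

Lemma Afun_doubleS n j :
  Afun a b q n.*2.+1 (Posz j.*2.+1) =
  qbinom q n j * cfun (n - j) (q ^+ j.*2.+1 * a) (q ^+ j.+1 * b) q.
Proof.
by rewrite /Afun addSn addnS -doubleD /= !odd_double /= !uphalf_double.
Qed.

Lemma Tfun_doubleS j :
  Tfun a b q j.*2.+1 = (1 - q ^+ j.+1) * (q ^+ j * b - q ^+ j.*2 * a) /
    ((1 - q ^+ j.*2 * a) * (1 - q ^+ j.*2.+1 * a)).
Proof.
by rewrite /Tfun /= odd_double /= uphalf_double -addnn exprD !invfM; ring.
Qed.

Lemma Tfun_double j :
  Tfun a b q (j.+1).*2 = (1 - q ^+ j.+1 * b) * (q ^+ j.+1 - q ^+ j.*2.+1 * a) /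
    ((1 - q ^+ j.*2.+1 * a) * (1 - q ^+ (j.+1).*2 * a)).
Proof.
by rewrite /Tfun /= odd_double /= doubleK -addnn -addSn exprD !invfM; ring.
Qed.

Hypotheses (ha : forall m : nat, 1 - q ^+ m * a != 0)
           (hq : forall m : nat, 1 - q ^+ m.+1 != 0).

Lemma Afun_rec_odd n j :
  Afun a b q n.*2.+1 (Posz j.*2.+1) =
  Afun a b q n.*2 (Posz j.*2) +
  Tfun a b q j.*2.+1 * Afun a b q n.*2 (Posz (j.+1).*2).
Proof.
rewrite Afun_doubleS !Afun_double Tfun_doubleS qbinomSr // subnS.
rewrite doubleS !exprS -!mulrA.
set x := (q ^+ j.*2 * a)%R; set y := (q ^+ j * b)%R.
have hx i : 1 - q ^+ i * x != 0 by rewrite mulrA -exprD.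
have := hx 0%N; have := hx 1%N; rewrite expr0 expr1 !mul1r => hqx hx0.
have hqj : 1 - q * q ^+ j != 0 by rewrite -exprS.
case: (n - j)%N => [|m] /=.
  by rewrite !cfun0 expr0 subrr !(mul0r, mulr0) addr0.
rewrite cfunS cfunSl cfun_shift; last by rewrite mulrA -exprSr.
move: (cfun m _ _ q) (qbinom q n j) => C P; rewrite exprS.
by field; rewrite hqj hqx hx0 mulrA -exprSr hx.
Qed.

Lemma Afun_rec_even n j :
  Afun a b q (n.+1).*2 (Posz (j.+1).*2) =
  Afun a b q n.*2.+1 (Posz j.*2.+1) +
  Tfun a b q (j.+1).*2 * Afun a b q n.*2.+1 (Posz (j.+1).*2.+1).
Proof.
rewrite Afun_double !Afun_doubleS Tfun_double subSS qbinomSS qbinomSr // subnS.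
case: (ltnP n j) => [ltnj|/subnK <-].
  by rewrite qbinom_gt // !(mul0r, mulr0) addr0.
move: (n - j)%N => m; rewrite addnK.
rewrite doubleS !exprS -!mulrA.
set x := (q * (q ^+ j.*2 * a))%R; set y := (q * (q ^+ j * b))%R.
have hx i : 1 - q ^+ i * x != 0 by rewrite mulrA -exprSr mulrA -exprD.
have := hx 0%N; have := hx 1%N; rewrite expr0 expr1 !mul1r => hqx hx0.
have hqj : 1 - q * q ^+ j != 0 by rewrite -exprS.
case: m => [|m] /=.
  by rewrite !cfun0 expr0 subrr add0n !(mul0r, mulr0) addr0 !mulr1 mulfV ?mulr1.
rewrite [cfun _ x y q]cfun_shift // !cfunSl.
move: (cfun m _ _ q) (qbinom q _ j) => C P; rewrite exprD !exprS.
by field; rewrite hqj hqx hx0.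
Qed.

Lemma Afun_rec_zero n :
  Afun a b q (n.+1).*2 0 = Tfun a b q 0 * Afun a b q n.*2.+1 1.
Proof.
rewrite (Afun_double n.+1 0) (Afun_doubleS n 0) !qbinom_n0 // !subn0 !mul1r.
by rewrite !expr1 cfunSl.
Qed.

Lemma Afun_row0 k : Afun a b q 0 k = (k == 0)%:R.
Proof.
case: k => [k|k] //; rewrite -(odd_double_half k).
case: (odd k); first by rewrite Afun_odd //= odd_double.
rewrite add0n (Afun_double 0 k./2) cfun0 mulr1.
by case: k./2 => [|j]; rewrite ?qbinom_n0 ?qbinom_gt.
Qed.

End Recurrence.

Lemma double_or_doubleS n : (exists m, n = m.*2) \/ (exists m, n = m.*2.+1).
Proof.
by rewrite -(odd_double_half n); case: (odd n); [right | left]; exists n./2.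
Qed.

Theorem theorem1 (F : fieldType) (a b q : F)
  (ha : forall m : nat, 1 - q ^+ m * a != 0)
  (hq : forall m : nat, 1 - q ^+ m.+1 != 0) :
  (forall k : int, Afun a b q 0 k = (k == 0)%:R) /\
  (forall n : nat, Afun a b q n.+1 0 = Tfun a b q 0 * Afun a b q n 1) /\
  (forall (n k : nat), (1 <= k)%N ->
     Afun a b q n.+1 (Posz k) =
       Afun a b q n (Posz k.-1) + Tfun a b q k * Afun a b q n (Posz k.+1)).
Proof.
split; [exact: Afun_row0 | split].
  move=> n; case: (double_or_doubleS n) => [[m ->]|[m ->]].
    by rewrite !Afun_odd ?mulr0 //= ?addn0 ?addn1 /= ?odd_double.
  exact: Afun_rec_zero.
move=> n [|k] // _; rewrite succnK.
case: (double_or_doubleS n) => [[m ->]|[m ->]];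
  case: (double_or_doubleS k) => [[j ->]|[j ->]].
- exact: Afun_rec_odd.
- by rewrite !Afun_odd ?mulr0 ?addr0 //= ?addnS ?addSn /= ?oddD ?odd_double.
- by rewrite !Afun_odd ?mulr0 ?addr0 //= ?addnS ?addSn /= ?oddD ?odd_double.
- exact: Afun_rec_even.
Qed.
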